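(* Let $(\mathcal W,\rhd)$ be a $\lambda$A-frame and $\eta$ a hereditary type environment. If $A\simeq B$, then $\mathcal I[A]^\eta_p=\mathcal I[B]^\eta_p$ for every $p\in\mathcal W$.
   Context: Type expressions: fix a countably infinite set of type variables $X,Y,Z,\dots$. Pseudo type expressions are generated by $A::=X\mid A\to A\mid \bullet A\mid \mu X.A$ ($\mu$ binds $X$; $\alpha$-convertible expressions are identified; $\to$ associates to the right; $\bullet$ binds tighter than $\to$, which binds tighter than $\mu$). $A[B/X]$ denotes capture-avoiding substitution. $\top$ abbreviates $\mu X.\bullet X$, and $\bullet^n A$ denotes $A$ prefixed by $n$ copies of $\bullet$. The tail $t(A)$ is defined by $t(X)=X$, $t(A\to B)=t(B)$, $t(\bullet A)=\bullet t(A)$, $t(\mu X.A)=\mu X.t(A)$; it always has the form $\bullet^{m_0}\mu X_1.\bullet^{m_1}\mu X_2.\cdots\mu X_n.\bullet^{m_n}Y$. $A$ is a $\top$-variant iff $Y=X_i$ for some $1\le i\le n$ with $X_i\notin\{X_{i+1},\dots,X_n\}$ and $m_i+\dots+m_n\ge 1$. $A$ is proper in $X$ iff: a variable $Y$ is proper in $X$ iff $Y\neq X$; $\bullet A$ is always proper in $X$; $A\to B$ is proper in $X$ iff both $A,B$ are proper in $X$ or $B$ is a $\top$-variant; for $Y\ne X$, $\mu Y.A$ is proper in $X$ iff $A$ is proper in $X$ or $\mu Y.A$ is a $\top$-variant. Type expressions are the least set of pseudo type expressions containing all type variables, closed under $\to$ and $\bullet$, and containing $\mu X.A$ whenever it contains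 $A$ and $A$ is proper in $X$. Equality: $\cong$ is the least relation on type expressions such that: $A\cong A$; $A\cong B$ implies $B\cong A$; $A\cong B$ and $B\cong C$ imply $A\cong C$; $A\cong B$ implies $\bullet A\cong\bullet B$; $A\cong C$ and $B\cong D$ imply $A\to B\cong C\to D$; $A\to\top\cong\top$; $\mu X.A\cong A[\mu X.A/X]$; and if $A\cong C[A/X]$ with $C$ proper in $X$, then $A\cong\mu X.C$. $\simeq$ is the least relation satisfying the same closure conditions and additionally $\bullet(A\to B)\simeq\bullet A\to\bullet B$. Semantics: a syntactical $\lambda$-algebra $(\mathcal V,\cdot,[\![-]\!])$ consists of a nonempty set $\mathcal V$, a map $\cdot:\mathcal V\times\mathcal V\to\mathcal V$, and values $[\![M]\!]_\rho\in\mathcal V$ for untyped $\lambda$-terms $M$ and maps $\rho$ from individual variables to $\mathcal V$, such that $[\![x]\!]_\rho=\rho(x)$, $[\![MN]\!]_\rho=[\![M]\!]_\rho\cdot[\![N]\!]_\rho$, $[\![\lambda x.M]\!]_\rho\cdot v=[\![M]\!]_{\rho[v/x]}$, $[\![M]\!]_\rho$ depends only on $\rho$ restricted to free variables of $M$, and $M=_\beta N$ implies $[\![M]\!]_\rho=[\![N]\!]_\rho$; fix one. A well-founded frame is a pair $(\mathcal W,\rhd)$ with $\mathcal W$ nonempty and $\rhd$ a binary relation on $\mathcal W$ admitting no infinite chain $p_0\rhd p_1\rhd p_2\rhd\cdots$; $\trianglerighteq$ denotes the reflexive-transitive closure of $\rhd$. $\rhd$ is locally linear if whenever $p\rhd q$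 there is $r$ with $p\trianglerighteq r\rhd q$ such that $r\rhd s$ implies $q\trianglerighteq s$ for all $s$. A $\lambda$A-frame is a well-founded frame whose $\rhd$ is locally linear. A type environment $\eta$ assigns a set $\eta(X)_p\subseteq\mathcal V$ to each type variable $X$ and world $p$; it is hereditary if $p\rhd q$ implies $\eta(X)_p\subseteq\eta(X)_q$. For hereditary $\eta$, $\mathcal I[A]^\eta_p\subseteq\mathcal V$ is defined (by well-founded induction on $p$ and the syntactic rank of $A$) by: $\mathcal I[A]^\eta_p=\mathcal V$ if $A$ is a $\top$-variant; otherwise $\mathcal I[X]^\eta_p=\eta(X)_p$; $\mathcal I[\bullet A]^\eta_p=\{u\mid u\in\mathcal I[A]^\eta_q\text{ for all }q\text{ with }p\rhd q\}$; $\mathcal I[A\to B]^\eta_p=\{u\mid \text{for all }q\text{ with }p\trianglerighteq q\text{ and all }v\in\mathcal I[A]^\eta_q,\ u\cdot v\in\mathcal I[B]^\eta_q\}$; $\mathcal I[\mu X.A]^\eta_p=\mathcal I[A[\mu X.A/X]]^\eta_p$. *)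

(* Syntax is represented with de Bruijn indices, so that
   alpha-convertible expressions are literally identified. *)
From Stdlib Require Import Relations Arith.

Inductive ty : Type :=
| TVar : nat -> ty
| TArr : ty -> ty -> ty
| TLater : ty -> ty
| TMu : ty -> ty.   (* TMu A binds de Bruijn index 0 in A *)

Fixpoint tshift (c : nat) (A : ty) : ty :=
  match A with
  | TVar k => if c <=? k then TVar (S k) else TVar k
  | TArr A1 A2 => TArr (tshift c A1) (tshift c A2)
  | TLater A1 => TLater (tshift c A1)
  | TMu A1 => TMu (tshift (S c) A1)
  end.

Fixpoint tsubst (j : nat) (B : ty) (A : ty) : ty :=
  match A with
  | TVar k => if k =? j then B else if j <? k then TVar (pred k) else TVar k
  | TArr A1 A2 => TArr (tsubst j B A1) (tsubst j B A2)
  | TLater A1 => TLater (tsubst j B A1)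
  | TMu A1 => TMu (tsubst (S j) (tshift 0 B) A1)
  end.

(* A[B/X] where X is the variable bound by an enclosing mu (index 0) *)
Definition tsubst0 (B A : ty) : ty := tsubst 0 B A.

Definition top : ty := TMu (TLater (TVar 0)).

Fixpoint tail (A : ty) : ty :=
  match A with
  | TVar k => TVar k
  | TArr _ B => tail B
  | TLater A1 => TLater (tail A1)
  | TMu A1 => TMu (tail A1)
  end.

(* On a tail  •^{m0} mu X1. •^{m1} ... mu Xn. •^{mn} Y :
   g k = None        : index k is free in the tail
   g k = Some b      : index k is bound by some X_i, and b = (m_i+...+m_n >= 1)
                       counted so far. *)
Fixpoint top_aux (g : nat -> option bool) (T : ty) : bool :=
  match T with
  | TVar k => match g k with Some true => true | _ => false end
  | TArr _ _ => false
  | TLater T1 => top_aux (fun k => option_map (fun _ => true) (g k)) T1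
  | TMu T1 => top_aux (fun k => match k with 0 => Some false | S k' => g k' end) T1
  end.

Definition is_top (A : ty) : bool := top_aux (fun _ => None) (tail A).

Fixpoint proper (j : nat) (A : ty) : Prop :=
  match A with
  | TVar k => k <> j
  | TArr A1 A2 => (proper j A1 /\ proper j A2) \/ is_top A2 = true
  | TLater _ => True
  | TMu A1 => proper (S j) A1 \/ is_top (TMu A1) = true
  end.

Fixpoint wf (A : ty) : Prop :=
  match A with
  | TVar _ => True
  | TArr A1 A2 => wf A1 /\ wf A2
  | TLater A1 => wf A1
  | TMu A1 => wf A1 /\ proper 0 A1
  end.

(* the equality  ≃  (with the extra rule •(A->B) ≃ •A -> •B) *)
Inductive teqL : ty -> ty -> Prop :=
| teqL_refl A : wf A -> teqL A A
| teqL_sym A B : teqL A B -> teqL B A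
| teqL_trans A B C : teqL A B -> teqL B C -> teqL A C
| teqL_later A B : teqL A B -> teqL (TLater A) (TLater B)
| teqL_arr A B C D : teqL A C -> teqL B D -> teqL (TArr A B) (TArr C D)
| teqL_top A : wf A -> teqL (TArr A top) top
| teqL_unfold A : wf (TMu A) -> teqL (TMu A) (tsubst0 (TMu A) A)
| teqL_fix A C : wf C -> proper 0 C -> teqL A (tsubst0 A C) -> teqL A (TMu C)
| teqL_dist A B : wf A -> wf B ->
    teqL (TLater (TArr A B)) (TArr (TLater A) (TLater B)).

Inductive lam : Type :=
| LVar : nat -> lam
| LApp : lam -> lam -> lam
| LAbs : lam -> lam.

Fixpoint lshift (c : nat) (M : lam) : lam :=
  match M with
  | LVar k => if c <=? k then LVar (S k) else LVar k
  | LApp M1 M2 => LApp (lshift c M1) (lshift c M2)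
  | LAbs M1 => LAbs (lshift (S c) M1)
  end.

Fixpoint lsubst (j : nat) (N : lam) (M : lam) : lam :=
  match M with
  | LVar k => if k =? j then N else if j <? k then LVar (pred k) else LVar k
  | LApp M1 M2 => LApp (lsubst j N M1) (lsubst j N M2)
  | LAbs M1 => LAbs (lsubst (S j) (lshift 0 N) M1)
  end.

Fixpoint lfree (x : nat) (M : lam) : Prop :=
  match M with
  | LVar k => k = x
  | LApp M1 M2 => lfree x M1 \/ lfree x M2
  | LAbs M1 => lfree (S x) M1
  end.

Inductive beq : lam -> lam -> Prop :=
| beq_refl M : beq M M
| beq_sym M N : beq M N -> beq N M
| beq_trans M N P : beq M N -> beq N P -> beq M P
| beq_app M M' N N' : beq M M' -> beq N N' -> beq (LApp M N) (LApp M' N')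
| beq_abs M M' : beq M M' -> beq (LAbs M) (LAbs M')
| beq_beta M N : beq (LApp (LAbs M) N) (lsubst 0 N M).

Definition scons {T : Type} (v : T) (rho : nat -> T) (n : nat) : T :=
  match n with 0 => v | S k => rho k end.

Record SynLamAlg : Type := {
  carrier : Type;
  app : carrier -> carrier -> carrier;
  sem : lam -> (nat -> carrier) -> carrier;
  sla_nonempty : inhabited carrier;
  sla_var : forall x rho, sem (LVar x) rho = rho x;
  sla_app : forall M N rho, sem (LApp M N) rho = app (sem M rho) (sem N rho);
  sla_abs : forall M rho v, app (sem (LAbs M) rho) v = sem M (scons v rho);
  sla_fv : forall M rho rho', (forall x, lfree x M -> rho x = rho' x) ->
             sem M rho = sem M rho';
  sla_beta : forall M N rho, beq M N -> sem M rho = sem N rho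
}.

Definition well_founded_frame (W : Type) (R : W -> W -> Prop) : Prop :=
  inhabited W /\ ~ (exists f : nat -> W, forall n, R (f n) (f (S n))).

Definition locally_linear (W : Type) (R : W -> W -> Prop) : Prop :=
  forall p q, R p q ->
    exists r, clos_refl_trans W R p r /\ R r q /\
      (forall s, R r s -> clos_refl_trans W R q s).

Definition lambdaA_frame (W : Type) (R : W -> W -> Prop) : Prop :=
  well_founded_frame W R /\ locally_linear W R.

Definition hereditary (V W : Type) (R : W -> W -> Prop)
  (eta : nat -> W -> V -> Prop) : Prop :=
  forall X p q, R p q -> forall u, eta X p u -> eta X q u.

(* I : ty -> W -> (subsets of V) satisfies the defining clauses of
   I[A]^eta_p on all type expressions A and all worlds p.  (These clauses
   determine I uniquely on type expressions by well-founded induction.) *)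
Definition is_interp (L : SynLamAlg) (W : Type) (R : W -> W -> Prop)
  (eta : nat -> W -> carrier L -> Prop)
  (I : ty -> W -> carrier L -> Prop) : Prop :=
  forall A p, wf A ->
    (is_top A = true -> forall u, I A p u) /\
    (is_top A = false ->
      match A with
      | TVar X => forall u, I A p u <-> eta X p u
      | TLater A1 => forall u, I A p u <-> (forall q, R p q -> I A1 q u)
      | TArr A1 A2 => forall u, I A p u <->
          (forall q, clos_refl_trans W R p q ->
             forall v, I A1 q v -> I A2 q (app L u v))
      | TMu A1 => forall u, I A p u <-> I (tsubst0 (TMu A1) A1) p u
      end).

(* Soundness of ≃ is proved by induction on the derivation; every rule but
   the fixed-point rule is a direct check against the defining clauses of the
   interpretation (the distribution rule uses local linearity and
   monotonicity of I along ⊳).  For the fixed-point rule one shows, by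
   well-founded induction on worlds and an inner induction on the rank of C,
   that C[A/X] and C[B/X] have the same interpretation at p as soon as A and
   B agree at all strict successors of p and C is proper in X: properness
   means X occurs only under • (or in a part that is a ⊤-variant), and •
   moves evaluation to strict successors. *)
From Stdlib Require Import Relations Wellfounded Arith Lia Classical
  IndefiniteDescription.

Ltac case_nat_tests := repeat match goal with
  | |- context [?a <=? ?b] => destruct (Nat.leb_spec a b)
  | |- context [?a =? ?b] => destruct (Nat.eqb_spec a b)
  | |- context [?a <? ?b] => destruct (Nat.ltb_spec a b)
  end.

(** * Shifting and substitution *)

Lemma tshift_tshift T c d : c <= d ->
  tshift c (tshift d T) = tshift (S d) (tshift c T).
Proof.
  revert c d; induction T; intros c d Hcd; cbn [tshift].
  - case_nat_tests; cbn [tshift]; case_nat_tests; reflexivity || lia.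
  - rewrite IHT1, IHT2 by lia; reflexivity.
  - rewrite IHT by lia; reflexivity.
  - rewrite IHT by lia; reflexivity.
Qed.

Lemma tsubst_tshift T c N : tsubst c N (tshift c T) = T.
Proof.
  revert c N; induction T; intros c N; cbn [tshift tsubst].
  - case_nat_tests; cbn [tsubst]; case_nat_tests; f_equal; lia.
  - rewrite IHT1, IHT2; reflexivity.
  - rewrite IHT; reflexivity.
  - rewrite IHT; reflexivity.
Qed.

Lemma tshift_tsubst T c i N : c <= i ->
  tshift c (tsubst i N T) = tsubst (S i) (tshift c N) (tshift c T).
Proof.
  revert c i N; induction T; intros c i N Hci; cbn [tshift tsubst].
  - case_nat_tests; cbn [tshift tsubst]; case_nat_tests;
      reflexivity || lia || (f_equal; lia).
  - rewrite IHT1, IHT2 by lia; reflexivity.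
  - rewrite IHT by lia; reflexivity.
  - rewrite IHT, (tshift_tshift N 0 c) by lia; reflexivity.
Qed.

Lemma tsubst_tsubst D c i M X : c <= i ->
  tsubst i X (tsubst c M D) = tsubst c (tsubst i X M) (tsubst (S i) (tshift c X) D).
Proof.
  revert c i M X; induction D; intros c i M X Hci; cbn [tshift tsubst].
  - case_nat_tests; cbn [tsubst]; case_nat_tests;
      reflexivity || lia || (rewrite tsubst_tshift; reflexivity) || (f_equal; lia).
  - rewrite IHD1, IHD2 by lia; reflexivity.
  - rewrite IHD by lia; reflexivity.
  - rewrite IHD, tshift_tsubst, (tshift_tshift X 0 c) by lia; reflexivity.
Qed.

Lemma tsubst_unfold j X D :
  tsubst j X (tsubst0 (TMu D) D)
  = tsubst0 (TMu (tsubst (S j) (tshift 0 X) D)) (tsubst (S j) (tshift 0 X) D).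
Proof. apply tsubst_tsubst; lia. Qed.

(** * ⊤-variants *)

Lemma tail_tshift T c : tail (tshift c T) = tshift c (tail T).
Proof.
  revert c; induction T; intros c; cbn [tail tshift]; rewrite ?IHT, ?IHT2; auto.
  case_nat_tests; reflexivity.
Qed.

Lemma top_aux_tshift T c g h :
  (forall k, h k = g (if c <=? k then S k else k)) ->
  top_aux g (tshift c T) = top_aux h T.
Proof.
  revert c g h; induction T; intros c g h Hh; cbn [tshift top_aux].
  - rewrite Hh; destruct (c <=? n); reflexivity.
  - reflexivity.
  - apply IHT; intros k; rewrite Hh; reflexivity.
  - apply IHT; intros [|k]; [reflexivity|]; cbn; rewrite Hh.
    destruct (c <=? k); reflexivity.
Qed.

Lemma is_top_tshift T c : is_top (tshift c T) = is_top T.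
Proof. unfold is_top; rewrite tail_tshift; apply top_aux_tshift; reflexivity. Qed.

(* The tail is a ⊤-variant however its free variables are classified;
   this is what survives substitution into a ⊤-variant. *)
Definition top_in_any_context (N : ty) : Prop :=
  forall g, top_aux g (tail N) = true.

Lemma top_in_any_context_tshift N c :
  top_in_any_context N -> top_in_any_context (tshift c N).
Proof.
  intros HN g; rewrite tail_tshift.
  rewrite (top_aux_tshift _ c g (fun k => g (if c <=? k then S k else k))); auto.
Qed.

Lemma top_aux_mono T g1 g2 : (forall k b, g1 k = Some b -> g2 k = Some b) ->
  top_aux g1 T = true -> top_aux g2 T = true.
Proof.
  revert g1 g2; induction T; intros g1 g2 Hg; cbn [top_aux].
  - destruct (g1 n) as [[|]|] eqn:E; try discriminate; rewrite (Hg _ _ E); auto.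
  - auto.
  - apply IHT; intros k b; destruct (g1 k) eqn:E; try discriminate.
    rewrite (Hg _ _ E); auto.
  - apply IHT; intros [|k] b; cbn; auto.
Qed.

Lemma is_top_in_any_context T : is_top T = true -> top_in_any_context T.
Proof. intros H g; eapply top_aux_mono; [|exact H]; discriminate. Qed.

Lemma top_aux_tail_tsubst A j N g g' :
  (forall k, k < j -> g' k = g k) ->
  (forall k, j < k -> g' k = g (pred k)) ->
  (g' j <> None -> top_in_any_context N) ->
  top_aux g' (tail A) = true -> top_aux g (tail (tsubst j N A)) = true.
Proof.
  revert j N g g'; induction A; intros j N g g' Hlt Hgt HN HA;
    cbn [tail tsubst top_aux] in *.
  - destruct (Nat.eqb_spec n j).
    + subst; apply HN; destruct (g' j); congruence.
    + destruct (Nat.ltb_spec j n); cbn [tail top_aux].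
      * rewrite <- Hgt by lia; exact HA.
      * rewrite <- Hlt by lia; exact HA.
  - eauto.
  - eapply IHA; [| | |exact HA].
    + intros k Hk; cbn; rewrite Hlt; auto.
    + intros k Hk; cbn; rewrite Hgt; auto.
    + intros Hn; apply HN; intro E; apply Hn; cbn; rewrite E; reflexivity.
  - eapply IHA; [| | |exact HA].
    + intros [|k] Hk; cbn; auto; apply Hlt; lia.
    + intros [|[|k]] Hk; cbn; try lia; apply Hgt; lia.
    + intros Hn; apply top_in_any_context_tshift; auto.
Qed.

Lemma is_top_tsubst A j N : is_top A = true -> is_top (tsubst j N A) = true.
Proof.
  intros H; eapply top_aux_tail_tsubst; [| | |exact H]; auto.
  intros Hc; exfalso; apply Hc; reflexivity.
Qed.

Lemma is_top_unfold A : is_top (TMu A) = true -> is_top (tsubst0 (TMu A) A) = true.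
Proof.
  intros H; eapply top_aux_tail_tsubst; [| | |exact H].
  - intros; lia.
  - intros [|k] Hk; [lia|reflexivity].
  - intros _; apply is_top_in_any_context; exact H.
Qed.

(** * Properness and well-formedness *)

Lemma proper_tshift_self T c : proper c (tshift c T).
Proof.
  revert c; induction T; intros c; cbn [tshift proper]; auto.
  case_nat_tests; cbn [proper]; lia.
Qed.

Lemma proper_tshift T c i : proper i T ->
  proper (if c <=? i then S i else i) (tshift c T).
Proof.
  revert c i; induction T; intros c i H; cbn [tshift proper] in *.
  - case_nat_tests; cbn [proper]; lia.
  - destruct H as [[H1 H2]|Ht]; [left; auto|right; rewrite is_top_tshift; auto].
  - auto.
  - destruct H as [H|H].
    + left; specialize (IHT (S c) (S i) H); cbn in IHT.
      destruct (c <=? i); exact IHT.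
    + right; change (is_top (tshift c (TMu T)) = true); rewrite is_top_tshift; auto.
Qed.

(* [i'] is the index that [i] becomes once [j] is substituted away. *)
Lemma proper_tsubst A j N i i' : i <> j ->
  (i < j -> i' = i) -> (j < i -> i' = pred i) ->
  proper i' N -> proper i A -> proper i' (tsubst j N A).
Proof.
  revert j N i i'; induction A; intros j N i i' Hij Hlt Hgt HN HA;
    cbn [tsubst proper] in *.
  - case_nat_tests; cbn [proper]; auto; lia.
  - destruct HA as [[H1 H2]|Ht]; [left; split; eauto|right; apply is_top_tsubst; auto].
  - auto.
  - destruct HA as [HA|HA].
    + left; apply IHA with (i := S i); try lia; auto.
      apply (proper_tshift N 0 i'); auto.
    + right; change (is_top (tsubst j N (TMu A)) = true); apply is_top_tsubst; auto.
Qed.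

Lemma wf_tshift T c : wf T -> wf (tshift c T).
Proof.
  revert c; induction T; intros c H; cbn [tshift wf] in *; auto.
  - case_nat_tests; exact I.
  - destruct H; split; auto.
  - destruct H; split; auto.
    apply (proper_tshift T (S c) 0); auto.
Qed.

Lemma wf_tsubst A j N : wf N -> wf A -> wf (tsubst j N A).
Proof.
  revert j N; induction A; intros j N HN HA; cbn [tsubst wf] in *; auto.
  - case_nat_tests; cbn; auto.
  - destruct HA; split; auto.
  - destruct HA; split.
    + apply IHA; auto; apply wf_tshift; auto.
    + apply proper_tsubst with (i := 0); try lia; auto; apply proper_tshift_self.
Qed.

Lemma wf_unfold A : wf (TMu A) -> wf (tsubst0 (TMu A) A).
Proof. intros H; apply wf_tsubst; auto; apply H. Qed.

Lemma teqL_wf A B : teqL A B -> wf A /\ wf B.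
Proof.
  induction 1; cbn [wf] in *; try tauto.
  - unfold top; cbn; tauto.
  - split; auto; apply wf_unfold; cbn; tauto.
Qed.

(** * Rank *)

(* ⊤-variants get rank 0, so that unfolding a non-⊤ [mu] lowers the rank. *)
Fixpoint rank (T : ty) : nat :=
  if is_top T then 0 else
  match T with
  | TArr A B => S (Nat.max (rank A) (rank B))
  | TMu A => S (rank A)
  | _ => 0
  end.

Lemma rank_ind (P : ty -> Prop) :
  (forall D, (forall D', rank D' < rank D -> P D') -> P D) -> forall D, P D.
Proof.
  intros H; apply (well_founded_induction (wf_inverse_image _ _ lt rank lt_wf)).
  exact H.
Qed.

Lemma rank_top T : is_top T = true -> rank T = 0.
Proof. intros H; destruct T; cbn [rank]; rewrite H; reflexivity. Qed.

Lemma rank_arr A B : is_top B = false -> rank (TArr A B) = S (Nat.max (rank A) (rank B)).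
Proof. intros H; cbn [rank]; change (is_top (TArr A B)) with (is_top B); rewrite H; auto. Qed.

Lemma rank_arr_le A B : rank (TArr A B) <= S (Nat.max (rank A) (rank B)).
Proof. cbn [rank]; destruct (is_top (TArr A B)); lia. Qed.

Lemma rank_mu A : is_top (TMu A) = false -> rank (TMu A) = S (rank A).
Proof. intros H; cbn [rank]; rewrite H; reflexivity. Qed.

Lemma rank_mu_le A : rank (TMu A) <= S (rank A).
Proof. cbn [rank]; destruct (is_top (TMu A)); lia. Qed.

Lemma rank_tsubst D j N : proper j D -> rank (tsubst j N D) <= rank D.
Proof.
  revert j N; induction D; intros j N H.
  - assert (Hv : forall k, rank (TVar k) = 0) by (intros k; reflexivity).
    cbn [proper tsubst] in *; case_nat_tests; rewrite ?Hv; lia.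
  - destruct (is_top D2) eqn:E.
    + rewrite rank_top; [lia|]; apply (is_top_tsubst (TArr D1 D2)); exact E.
    + rewrite rank_arr by exact E; cbn [proper] in H.
      destruct H as [[H1 H2]|H]; [|congruence].
      cbn [tsubst]; eapply Nat.le_trans; [apply rank_arr_le|].
      specialize (IHD1 j N H1); specialize (IHD2 j N H2); lia.
  - cbn [tsubst rank]; destruct (is_top _); lia.
  - destruct (is_top (TMu D)) eqn:E.
    + rewrite rank_top; [lia|]; apply is_top_tsubst; exact E.
    + rewrite rank_mu by exact E; cbn [proper] in H.
      destruct H as [H|H]; [|congruence].
      cbn [tsubst]; eapply Nat.le_trans; [apply rank_mu_le|].
      specialize (IHD (S j) (tshift 0 N) H); lia.
Qed.

Lemma rank_unfold A : wf (TMu A) -> is_top (TMu A) = false ->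
  rank (tsubst0 (TMu A) A) < rank (TMu A).
Proof.
  intros Hw Ht; rewrite rank_mu by auto.
  pose proof (rank_tsubst A 0 (TMu A) (proj2 Hw)); unfold tsubst0; lia.
Qed.

(** * Well-founded frames *)

Lemma no_infinite_chain_wf (W : Type) (R : W -> W -> Prop) :
  ~ (exists f : nat -> W, forall n, R (f n) (f (S n))) -> well_founded (transp W R).
Proof.
  intros Hno p; apply NNPP; intros Hp.
  assert (next : forall x, ~ Acc (transp W R) x -> {y | R x y /\ ~ Acc (transp W R) y}).
  { intros x Hx; apply constructive_indefinite_description.
    apply NNPP; intros Hn; apply Hx; constructor; intros y Hy.
    apply NNPP; intros Hy'; apply Hn; exists y; auto. }
  pose (chain := fix chain (n : nat) : {x | ~ Acc (transp W R) x} :=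
    match n with
    | 0 => exist _ p Hp
    | S n => let (y, Hy) := next _ (proj2_sig (chain n)) in exist _ y (proj2 Hy)
    end).
  apply Hno; exists (fun n => proj1_sig (chain n)); intros n; cbn.
  destruct (next _ (proj2_sig (chain n))) as [y Hy]; exact (proj1 Hy).
Qed.

Lemma clos_rt_eq_or_t (W : Type) (R : W -> W -> Prop) p q :
  clos_refl_trans W R p q -> q = p \/ clos_trans W R p q.
Proof.
  induction 1 as [x y H|x|x y z _ IHxy _ IHyz]; auto using t_step.
  destruct IHxy as [->|Hxy], IHyz as [->|Hyz]; eauto using t_trans.
Qed.

Lemma clos_t_rt_t (W : Type) (R : W -> W -> Prop) p q r :
  clos_trans W R p q -> clos_refl_trans W R q r -> clos_trans W R p r.
Proof.
  intros Hpq Hqr; destruct (clos_rt_eq_or_t W R q r Hqr) as [->|]; eauto using t_trans.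
Qed.

Lemma clos_t_first_step (W : Type) (R : W -> W -> Prop) p r :
  clos_trans W R p r -> exists q, R p q /\ clos_refl_trans W R q r.
Proof.
  intros H; apply clos_trans_t1n in H; destruct H as [r H|q r H Hqr].
  - exists r; auto using rt_refl.
  - exists q; split; auto; apply clos_t_clos_rt, clos_t1n_trans; exact Hqr.
Qed.

Lemma locally_linear_rt (W : Type) (R : W -> W -> Prop) :
  locally_linear W R -> forall p q r, R p q -> clos_refl_trans W R q r ->
  exists s, clos_refl_trans W R p s /\ R s r /\
    (forall t, R s t -> clos_refl_trans W R r t).
Proof.
  intros linear p q r Hpq Hqr; apply clos_rt_rtn1 in Hqr.
  destruct Hqr as [|r0 r Hr0 Hqr0]; [exact (linear p q Hpq)|].
  destruct (linear r0 r Hr0) as [s [Hr0s Hs]]; exists s; split; auto.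
  apply (rt_trans _ _ _ r0); auto.
  apply (rt_trans _ _ _ q); [apply rt_step; exact Hpq|apply clos_rtn1_rt; exact Hqr0].
Qed.

(** * The interpretation *)

Section Interpretation.

Variables (L : SynLamAlg) (W : Type) (R : W -> W -> Prop)
  (eta : nat -> W -> carrier L -> Prop) (I : ty -> W -> carrier L -> Prop).
Hypothesis frame : lambdaA_frame W R.
Hypothesis eta_hereditary : hereditary (carrier L) W R eta.
Hypothesis I_interp : is_interp L W R eta I.

Notation rt := (clos_refl_trans W R).
Notation ct := (clos_trans W R).

Lemma successors_wf : well_founded (transp W ct).
Proof.
  apply (wf_incl _ _ (clos_trans W (transp W R))).
  - intros x y; apply clos_trans_transp_permute.
  - apply wf_clos_trans, no_infinite_chain_wf, frame.
Qed.

Lemma I_top A p u : wf A -> is_top A = true -> I A p u.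
Proof. intros Hw Ht; exact (proj1 (I_interp A p Hw) Ht u). Qed.

Lemma I_var k p u : I (TVar k) p u <-> eta k p u.
Proof. exact (proj2 (I_interp (TVar k) p Logic.I) eq_refl u). Qed.

Lemma I_later A p u : wf A ->
  (I (TLater A) p u <-> forall q, R p q -> I A q u).
Proof.
  intros Hw; destruct (is_top A) eqn:E.
  - split; intros; apply I_top; auto.
  - exact (proj2 (I_interp (TLater A) p Hw) E u).
Qed.

Lemma I_arr A B p u : wf A -> wf B ->
  (I (TArr A B) p u <-> forall q, rt p q -> forall v, I A q v -> I B q (app L u v)).
Proof.
  intros Ha Hb; destruct (is_top B) eqn:E.
  - split; intros; apply I_top; cbn; auto.
  - exact (proj2 (I_interp (TArr A B) p (conj Ha Hb)) E u).
Qed.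

Lemma I_mu A p u : wf (TMu A) ->
  (I (TMu A) p u <-> I (tsubst0 (TMu A) A) p u).
Proof.
  intros Hw; destruct (is_top (TMu A)) eqn:E.
  - split; intros; apply I_top; auto using wf_unfold, is_top_unfold.
  - exact (proj2 (I_interp (TMu A) p Hw) E u).
Qed.

Lemma I_hereditary p q A u : wf A -> R p q -> I A p u -> I A q u.
Proof.
  revert q A u; induction p as [p IHp] using (well_founded_induction successors_wf).
  intros q A; revert q; induction A as [A IHA] using rank_ind; intros q u Hw Hpq HA.
  destruct (is_top A) eqn:E; [apply I_top; auto|].
  destruct A as [k|A1 A2|A1|A1].
  - rewrite I_var in *; eapply eta_hereditary; eauto.
  - destruct Hw; rewrite I_arr in * by auto.
    intros r Hqr; apply HA; eapply rt_trans; eauto using rt_step.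
  - rewrite I_later in * by auto.
    intros r Hqr; apply (IHp q (t_step _ _ _ _ Hpq) r A1 u); auto.
  - rewrite I_mu in * by auto.
    eapply IHA; eauto using rank_unfold, wf_unfold.
Qed.

Lemma I_hereditary_rt p q A u : wf A -> rt p q -> I A p u -> I A q u.
Proof. intros Hw H; induction H; eauto using I_hereditary. Qed.

Definition agree (X Y : ty) (p : W) : Prop := forall u, I X p u <-> I Y p u.

Lemma later_agree A B p : wf A -> wf B ->
  (forall q, R p q -> agree A B q) -> agree (TLater A) (TLater B) p.
Proof.
  intros HA HB H u; rewrite !I_later by auto.
  split; intros Hu q Hq; apply (H q Hq); auto.
Qed.

Lemma arr_agree A1 A2 B1 B2 p : wf A1 -> wf A2 -> wf B1 -> wf B2 ->
  (forall q, rt p q -> agree A1 B1 q /\ agree A2 B2 q) ->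
  agree (TArr A1 A2) (TArr B1 B2) p.
Proof.
  intros HA1 HA2 HB1 HB2 H u; rewrite !I_arr by auto.
  split; intros Hu q Hq v Hv; apply (H q Hq), Hu, (H q Hq); auto.
Qed.

Lemma later_arr_agree A B p : wf A -> wf B ->
  agree (TLater (TArr A B)) (TArr (TLater A) (TLater B)) p.
Proof.
  destruct frame as [_ linear].
  intros HA HB u; rewrite I_later, I_arr by (cbn; auto); split.
  - intros Hu q Hpq v Hv; rewrite I_later in * by auto; intros r Hqr.
    destruct (clos_t_first_step W R p r) as [q1 [Hpq1 Hq1r]].
    { apply (clos_rt_t _ _ _ q); auto using t_step. }
    specialize (Hu q1 Hpq1); rewrite I_arr in Hu by auto; auto.
  - intros Hu q Hpq; rewrite I_arr by auto; intros r Hqr v Hv.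
    destruct (locally_linear_rt W R linear p q r Hpq Hqr) as [s [Hps [Hsr Hsucc]]].
    specialize (Hu s Hps v); rewrite !I_later in Hu by auto.
    apply Hu; auto; intros t Hst; eapply I_hereditary_rt; eauto.
Qed.

Lemma tsubst_agree_at p X Y : wf X -> wf Y ->
  (forall q, ct p q -> forall D j, wf D -> agree (tsubst j X D) (tsubst j Y D) q) ->
  forall D j, wf D -> proper j D \/ agree X Y p ->
  agree (tsubst j X D) (tsubst j Y D) p.
Proof.
  intros HX HY Hsucc D; induction D as [D IH] using rank_ind; intros j HD Hguard.
  destruct (is_top D) eqn:E.
  { intros u; split; intros; apply I_top; auto using wf_tsubst, is_top_tsubst. }
  destruct D as [k|D1 D2|D1|D1]; cbn [tsubst].
  - destruct (Nat.eqb_spec k j) as [->|]; [|intros u; reflexivity].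
    destruct Hguard as [Hj|]; [cbn in Hj; congruence|auto].
  - destruct HD as [HD1 HD2].
    assert (E2 : is_top D2 = false) by exact E.
    assert (Hguard12 : (proper j D1 \/ agree X Y p) /\ (proper j D2 \/ agree X Y p)).
    { destruct Hguard as [[[]|Ht]|]; [tauto|congruence|tauto]. }
    rewrite rank_arr in IH by exact E2.
    apply arr_agree; auto using wf_tsubst.
    intros q Hq; destruct (clos_rt_eq_or_t W R p q Hq) as [->|Hpq]; auto.
    split; apply IH; tauto || lia.
  - apply later_agree; auto using wf_tsubst, t_step.
  - assert (HXD : forall Z, wf Z -> wf (tsubst j Z (TMu D1))) by auto using wf_tsubst.
    intros u; rewrite !I_mu by (apply HXD; auto).
    rewrite <- !tsubst_unfold.
    apply IH; auto using rank_unfold, wf_unfold.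
    destruct Hguard as [[Hj|Ht]|]; [|congruence|auto].
    left; apply proper_tsubst with (i := S j); try lia; cbn; auto.
Qed.

Lemma tsubst_agree X Y : wf X -> wf Y -> forall p,
  (forall q, rt p q -> agree X Y q) ->
  forall D j, wf D -> agree (tsubst j X D) (tsubst j Y D) p.
Proof.
  intros HX HY p; induction p as [p IHp] using (well_founded_induction successors_wf).
  intros Hagree D j HD; apply tsubst_agree_at; auto using rt_refl.
  intros q Hpq; apply IHp; auto.
  intros r Hqr; apply Hagree, (rt_trans _ _ _ q); [apply clos_t_clos_rt|]; auto.
Qed.

(* Agreement at [p] of [A] with [C[A]] and of [mu C] with [C[mu C]] bridges
   [C[A]] and [C[mu C]] because [C] is proper: only strict successors of [p]
   are consulted, where the induction hypothesis applies. *)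
Lemma fix_agree A C : wf A -> wf C -> proper 0 C ->
  (forall p, agree A (tsubst0 A C) p) -> forall p, agree A (TMu C) p.
Proof.
  intros HA HC HP Hfix p.
  induction p as [p IHp] using (well_founded_induction successors_wf).
  intros u; rewrite (Hfix p u), I_mu by (split; auto); unfold tsubst0.
  assert (HMu : wf (TMu C)) by (split; auto).
  apply tsubst_agree_at; auto.
  intros q Hpq; apply tsubst_agree; auto.
  intros r Hqr; apply IHp, (clos_t_rt_t W R p q r); auto.
Qed.

Lemma teqL_agree A B : teqL A B -> forall p, agree A B p.
Proof.
  induction 1 as [A _|A B _ IH|A B C _ IH1 _ IH2|A B HAB IH|A B C D HAC IH1 HBD IH2
    |A HA|A HA|A C HC HP HAC IH|A B HA HB]; intros p.
  - intros u; reflexivity.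
  - intros u; symmetry; apply IH.
  - intros u; rewrite (IH1 p u); apply IH2.
  - apply teqL_wf in HAB as [? ?]; apply later_agree; auto.
  - apply teqL_wf in HAC as [? ?]; apply teqL_wf in HBD as [? ?].
    apply arr_agree; auto.
  - intros u; split; intros; apply I_top; cbn; auto.
  - intros u; apply I_mu; auto.
  - apply teqL_wf in HAC as [? _]; apply fix_agree; auto.
  - apply later_arr_agree; auto.
Qed.

End Interpretation.

Theorem theorem4 (L : SynLamAlg) (W : Type) (R : W -> W -> Prop)
  (eta : nat -> W -> carrier L -> Prop) (I : ty -> W -> carrier L -> Prop) :
  lambdaA_frame W R ->
  hereditary (carrier L) W R eta ->
  is_interp L W R eta I ->
  forall A B : ty, teqL A B ->
  forall (p : W) (u : carrier L), I A p u <-> I B p u.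
Proof.
  intros frame eta_hereditary I_interp A B HAB p.
  exact (teqL_agree L W R eta I frame eta_hereditary I_interp A B HAB p).
Qed.
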